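(* Let $\delta\in(0,1)$, $\epsilon>0$, $\gamma^*\ge0$, and consider the progressive sampling algorithm PS-REG (described in the context) run on a simulation-based game with these parameters. If PS-REG returns an empirical utility function $\hat u$, then with probability at least $1-\delta$ it holds that $E(u)\subseteq E_{2\epsilon}(\hat u)$ and $E_\gamma(\hat u)\subseteq E_{2\epsilon+\gamma}(u)$ for all $0\le\gamma\le\gamma^*$, where $u$ is the true utility function.
   Context: Games. A normal-form game has a finite set of players $P$, finite pure strategy sets $S_p$, pure profile space $\mathbf{S}=\prod_pS_p$ and utility $u:\mathbf{S}\to\mathbb{R}^{|P|}$. For a profile $s$ and player $p$, $A_{p,s}$ is the set of pure profiles obtained from $s$ by replacing $p$'s strategy by any $t\in S_p$. $\mathrm{Reg}_p(s;u)=\sup_{s'\in A_{p,s}}u_p(s')-u_p(s)$, $\mathrm{Reg}(s;u)=\max_p\mathrm{Reg}_p(s;u)$; $E_\gamma(u)=\{s\in\mathbf{S}:\mathrm{Reg}(s;u)\le\gamma\}$, $E(u)=E_0(u)$. Simulation-based game: a simulator which, queried at a pure profile $s$, returns an independent random utility vector with coordinates in $[a_s,b_s]$; $c=\sup_s(b_s-a_s)$; the true utility $u(s)$ is the expected simulator output. Index set $\mathcal{I}=P\times\mathbf{S}$. Progressive sampling algorithm: schedule $m_1,\dots,m_T$, $M_t=m_1+\dots+m_t$. All indices start active. At iteration $t$, for each active $(p,s)$, draw $m_t$ fresh samples of $p$'s utility at $s$, let $\hat u^{(t)}_p(s)$ be the mean of all $M_t$ samples, and compute a deviation bound $\hat\epsilon^{(t)}_p(s)$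 with $|u_p(s)-\hat u^{(t)}_p(s)|\le\hat\epsilon^{(t)}_p(s)$ with probability at least $1-\delta/(|\mathcal{I}|T)$. Pruned indices are no longer sampled and retain their last values. After pruning, if no index is active the algorithm returns $\hat u=\hat u^{(t)}$; if the schedule is exhausted with active indices it returns nothing. PS-REG uses uniform deviation bounds (a single scalar $\hat\epsilon^{(t)}$ at iteration $t$ serving as the bound of every index). At iteration $t$ it prunes an active index $(p,s)$ if $\hat\epsilon^{(t)}\le\epsilon$ (well-estimated pruning) or if $\mathrm{Reg}_p(s;\hat u^{(t)})>\max\{2\hat\epsilon^{(t)},\ \gamma^*+\epsilon+\hat\epsilon^{(t)}\}$ (regret pruning). *)

From HB Require Import structures.
From mathcomp Require Import all_boot all_order all_algebra.
From mathcomp Require Import all_classical all_reals.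
From mathcomp Require Import measure probability_measure.
Set Implicit Arguments. Unset Strict Implicit. Unset Printing Implicit Defensive.
Import Order.TTheory GRing.Theory Num.Theory.
Local Open Scope ring_scope.

Section Games.
Variables (R : realType) (P : finType) (S : P -> finType).

Definition gprofile := {dffun forall p : P, S p}.
Definition gindex := (P * gprofile)%type.

Definition deviation (p : P) (s s' : gprofile) : bool :=
  [forall q : P, (q != p) ==> (s' q == s q)].

(* Reg_p(s;u) = sup_{s' in A_{p,s}} u_p(s') - u_p(s)  (finite; s in A_{p,s}) *)
Definition Regp (u : P -> gprofile -> R) (p : P) (s : gprofile) : R :=
  \big[Num.max/0]_(s' | deviation p s s') (u p s' - u p s).

Definition Reg (u : P -> gprofile -> R) (s : gprofile) : R :=
  \big[Num.max/0]_(p : P) Regp u p s.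

Definition Eg (gamma : R) (u : P -> gprofile -> R) : {set gprofile} :=
  [set s | Reg u s <= gamma].

Definition E0 (u : P -> gprofile -> R) : {set gprofile} := Eg 0 u.

Definition util_of (v : gindex -> R) : P -> gprofile -> R := fun p s => v (p, s).

(* Samples: X k i w is the k-th (k = 0,1,...) sample of
   gindex i = (p,s) (player p's utility at s) in outcome w. *)
Definition Msum (m : nat -> nat) (t : nat) : nat := \sum_(1 <= k < t.+1) m k.

Definition uhat {T : Type} (m : nat -> nat) (X : nat -> gindex -> T -> R)
  (t : nat) (i : gindex) (w : T) : R :=
  (Msum m t)%:R^-1 * \sum_(k < Msum m t) X k i w.

(* PS-REG pruning rule for an active gindex i at iteration t, with uniform
   bound e = eps^(t) and current empirical utility cur = uhat^(t). *)
Definition psreg_prune (eps_tgt gstar : R) (e : R) (cur : gindex -> R)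
  (i : gindex) : bool :=
  (e <= eps_tgt) ||
  (Num.max (2 * e) (gstar + eps_tgt + e) < Regp (util_of cur) i.1 i.2).

(* The loop: k remaining iterations, t current iteration number,
   act the active indices, cur the current (retained) values. *)
Fixpoint psreg_loop {T : Type} (eps_tgt gstar : R) (m : nat -> nat)
  (X : nat -> gindex -> T -> R) (eps : nat -> T -> R) (w : T)
  (k t : nat) (act : {set gindex}) (cur : gindex -> R) : option (gindex -> R) :=
  match k with
  | 0 => None
  | k'.+1 =>
    let cur' := fun i => if i \in act then uhat m X t i w else cur i in
    let e := eps t w in
    let act' := [set i in act | ~~ psreg_prune eps_tgt gstar e cur' i] in
    if act' == finset.set0 then Some cur'
    else psreg_loop eps_tgt gstar m X eps w k' t.+1 act' cur'
  end.

(* PS-REG run with schedule of length T on outcome w; None = returns nothing. *)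
Definition psreg {T : Type} (eps_tgt gstar : R) (Tn : nat) (m : nat -> nat)
  (X : nat -> gindex -> T -> R) (eps : nat -> T -> R) (w : T)
  : option (P -> gprofile -> R) :=
  omap util_of
    (psreg_loop eps_tgt gstar m X eps w Tn 1 [set: gindex] (fun _ => 0)).

End Games.

From HB Require Import structures.
From mathcomp Require Import all_boot all_order all_algebra.
From mathcomp Require Import all_classical all_reals.
From mathcomp Require Import measure probability_measure.
From mathcomp Require Import lra.
Set Implicit Arguments. Unset Strict Implicit. Unset Printing Implicit Defensive.
Import Order.TTheory GRing.Theory Num.Theory.
Local Open Scope ring_scope.
Local Open Scope classical_set_scope.

(* With probability at least 1 - delta all Tn * #|I| deviation bounds hold
   simultaneously (union bound); we then argue about a single such outcome.
   There, every estimate PS-REG freezes is sound: either it is eps-accurate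
   (well-estimated pruning), or the true best-deviation payoff of p exceeds
   u_p(s), and exceeds the estimate by gstar + eps (regret pruning: an empirical
   regret above 2e rules out s being a best response, one above
   gstar + eps + e pushes the estimate that far down).  Sound estimates are
   eps-accurate at best responses and never exceed the best-deviation payoff
   by more than eps, which gives both inclusions. *)

Section union_bound.
Variables (d : measure_display) (Omega : measurableType d) (R : realType).
Variable Pr : probability Omega R.

Lemma probability_setI_ge (A B : set Omega) : measurable A -> measurable B ->
  (Pr A + Pr B - 1 <= Pr (A `&` B))%E.
Proof.
move=> mA mB; have mAB := measurableI _ _ mA mB.
have : (Pr (~` A `|` ~` B) <= Pr (~` A) + Pr (~` B))%E.
  by apply: measureU2; exact: measurableC.
rewrite -setCI !probability_setC //.
rewrite -(fineK (fin_num_measure Pr _ mA)) -(fineK (fin_num_measure Pr _ mB)).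
rewrite -(fineK (fin_num_measure Pr _ mAB)).
rewrite -!EFinB -!EFinD !lee_fin; lra.
Qed.

Lemma probability_bigsetI_ge (I : Type) (s : seq I) (B : I -> set Omega) (a : R) :
  (forall i, measurable (B i)) -> (forall i, ((1 - a)%:E <= Pr (B i))%E) ->
  ((1 - (size s)%:R * a)%:E <= Pr (\big[setI/setT]_(i <- s) B i))%E.
Proof.
move=> mB PrB; elim: s => [|i s IHs].
  by rewrite big_nil probability_setT mul0r subr0.
rewrite big_cons; apply: le_trans (probability_setI_ge (mB i) _); last first.
  exact: bigsetI_measurable.
apply: le_trans (leeB (leeD (PrB i) IHs) (lexx 1%E)).
by rewrite -!EFinD lee_fin /= -add1n natrD; lra.
Qed.

End union_bound.

Section regret.
Variables (R : realType) (P : finType) (S : P -> finType).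
Implicit Types (f : P -> gprofile S -> R) (p : P) (s : gprofile S).

Lemma deviation_refl p s : deviation p s s.
Proof. by apply/forallP => q; apply/implyP. Qed.

Lemma deviation_sym p s s' : deviation p s s' -> deviation p s' s.
Proof.
move/forallP=> dev; apply/forallP => q; apply/implyP => qp.
by rewrite eq_sym (implyP (dev q) qp).
Qed.

Lemma deviation_trans p s1 s2 s3 :
  deviation p s1 s2 -> deviation p s2 s3 -> deviation p s1 s3.
Proof.
move=> /forallP dev12 /forallP dev23; apply/forallP => q; apply/implyP => qp.
by rewrite (eqP (implyP (dev23 q) qp)) (implyP (dev12 q) qp).
Qed.

Definition best_dev f p s := Order.arg_max s (deviation p s) (f p).

Definition best_payoff f p s := f p (best_dev f p s).

Lemma deviation_best_dev f p s : deviation p s (best_dev f p s).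
Proof. by rewrite /best_dev; case: arg_maxP => //; exact: deviation_refl. Qed.

Lemma le_best_payoff f p s s' : deviation p s s' -> f p s' <= best_payoff f p s.
Proof.
rewrite /best_payoff /best_dev.
by case: arg_maxP => [|s0 _ max_s0]; [exact: deviation_refl|exact: max_s0].
Qed.

Lemma best_payoff_deviation f p s s' :
  deviation p s s' -> best_payoff f p s' = best_payoff f p s.
Proof.
move=> dev; apply/le_anti/andP.
split; rewrite {1}/best_payoff; apply: le_best_payoff.
- exact: deviation_trans dev (deviation_best_dev f p s').
- exact: deviation_trans (deviation_sym dev) (deviation_best_dev f p s).
Qed.

Lemma RegpE f p s : Regp f p s = best_payoff f p s - f p s.
Proof.
apply/le_anti/andP; split.
  apply: bigmax_le => [|s' dev]; last by rewrite lerD2r le_best_payoff.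
  by rewrite subr_ge0 le_best_payoff // deviation_refl.
exact: (le_bigmax_cond _ _ (deviation_best_dev f p s)).
Qed.

Lemma EgP f gamma s : 0 <= gamma ->
  reflect (forall p s', deviation p s s' -> f p s' - f p s <= gamma)
          (s \in Eg gamma f).
Proof.
move=> gamma_ge0; rewrite inE; apply: (iffP idP) => [Reg_le p s' dev|dev_le].
  apply: le_trans Reg_le; apply: le_trans (le_bigmax _ (fun q => Regp f q s) p).
  by rewrite RegpE lerD2r le_best_payoff.
by apply: bigmax_le => // p _; rewrite RegpE dev_le // deviation_best_dev.
Qed.

Lemma accurate_le_best_payoff f p s s' v e :
  `|f p s' - v| <= e -> deviation p s s' -> v <= best_payoff f p s + e.
Proof.
rewrite ler_distlC => /andP[_ v_le] dev.
by apply: le_trans v_le _; rewrite lerD2r le_best_payoff.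
Qed.

End regret.

Section sound_estimates.
Variables (R : realType) (P : finType) (S : P -> finType).
Variables (u : P -> gprofile S -> R) (eps gstar : R).

Definition sound_estimate (i : gindex S) (v : R) :=
  `|u i.1 i.2 - v| <= eps \/
  (u i.1 i.2 < best_payoff u i.1 i.2 /\ v < best_payoff u i.1 i.2 - gstar - eps).

Lemma sound_estimate_le_best_payoff p s s' v : 0 < eps -> 0 <= gstar ->
  sound_estimate (p, s') v -> deviation p s s' -> v <= best_payoff u p s + eps.
Proof.
move=> eps_gt0 gstar_ge0 [acc dev|[_ v_lt] dev].
  exact: accurate_le_best_payoff acc dev.
by rewrite /= (best_payoff_deviation u dev) in v_lt; lra.
Qed.

Lemma sound_estimate_best_response p s v :
  best_payoff u p s <= u p s -> sound_estimate (p, s) v -> `|u p s - v| <= eps.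
Proof. by move=> best_le [//|[/lt_le_trans/(_ best_le)]]; rewrite ltxx. Qed.

Lemma regret_pruned_sound (v : gindex S -> R) (e : R) p s :
  `|u p s - v (p, s)| <= e ->
  (forall s', deviation p s s' -> v (p, s') <= best_payoff u p s + e) ->
  Num.max (2 * e) (gstar + eps + e) < Regp (util_of v) p s ->
  sound_estimate (p, s) (v (p, s)).
Proof.
move=> acc_s le_best; rewrite RegpE gt_max => /andP[gap_2e gap_gstar].
have := le_best _ (deviation_best_dev (util_of v) p s).
rewrite /sound_estimate /best_payoff /util_of /= in gap_2e gap_gstar *.
move: acc_s; rewrite ler_distlC => /andP[acc_lo acc_hi] le_v.
by right; split; lra.
Qed.

Definition refresh (act : {set gindex S}) (est cur : gindex S -> R) i :=
  if i \in act then est i else cur i.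

Lemma prune_step_sound (act : {set gindex S}) (est cur : gindex S -> R) (e : R) :
  0 < eps -> 0 <= gstar ->
  (forall i, `|u i.1 i.2 - est i| <= e) ->
  (forall i, i \notin act -> sound_estimate i (cur i)) ->
  let cur' := refresh act est cur in
  forall i, i \notin [set j in act | ~~ psreg_prune eps gstar e cur' j] ->
  sound_estimate i (cur' i).
Proof.
move=> eps_gt0 gstar_ge0 est_acc cur_sound cur' [p s].
rewrite inE negb_and negbK.
have [act_ps /= pruned|inact_ps _] := boolP ((p, s) \in act); last first.
  by rewrite /cur' /refresh (negbTE inact_ps); exact: cur_sound.
have cur'_ps : cur' (p, s) = est (p, s) by rewrite /cur' /refresh act_ps.
have [e_le|eps_lt] := leP e eps.
  by left; rewrite cur'_ps; exact: le_trans (est_acc (p, s)) e_le.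
apply: regret_pruned_sound; first by rewrite cur'_ps; exact: est_acc (p, s).
  move=> s' dev; rewrite /cur' /refresh; case: ifP => [_|/negbT inact_s'].
    exact: accurate_le_best_payoff (est_acc (p, s')) dev.
  have := sound_estimate_le_best_payoff eps_gt0 gstar_ge0
            (cur_sound _ inact_s') dev.
  by move/le_trans; apply; rewrite lerD2l ltW.
by move: pruned; rewrite /psreg_prune leNgt eps_lt.
Qed.

Lemma psreg_loop_sound (T : Type) (m : nat -> nat) (X : nat -> gindex S -> T -> R)
    (epsb : nat -> T -> R) (w : T) (k t : nat) (act : {set gindex S})
    (cur v : gindex S -> R) :
  0 < eps -> 0 <= gstar ->
  (forall t', (t <= t' < t + k)%N ->
     forall i, `|u i.1 i.2 - uhat m X t' i w| <= epsb t' w) ->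
  (forall i, i \notin act -> sound_estimate i (cur i)) ->
  psreg_loop eps gstar m X epsb w k t act cur = Some v ->
  forall i, sound_estimate i (v i).
Proof.
move=> eps_gt0 gstar_ge0.
elim: k t act cur => [//|k IHk] t act cur acc cur_sound /=.
have acc_t : (t <= t < t + k.+1)%N by rewrite leqnn addnS ltnS leq_addr.
have step := prune_step_sound eps_gt0 gstar_ge0 (acc t acc_t) cur_sound.
rewrite -/(refresh act (uhat m X t ^~ w) cur).
case: ifP => [/eqP act'_empty [<-] i|_].
  by apply: step; rewrite act'_empty inE.
apply: IHk => // t' /andP[lt_t' lt_k]; apply: acc.
by rewrite ltnW //= -addSnnS.
Qed.

Section sound_equilibria.
Variable uh : gindex S -> R.
Hypothesis uh_sound : forall i, sound_estimate i (uh i).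

Lemma sound_E0_sub : 0 < eps -> 0 <= gstar ->
  E0 u \subset Eg (2 * eps) (util_of uh).
Proof.
move=> eps_gt0 gstar_ge0; apply/fintype.subsetP => s s_eq.
apply/EgP => [|p s' dev]; first lra.
have best_le : best_payoff u p s <= u p s.
  move: s_eq => /(EgP _ _ (lexx 0)) /(_ p _ (deviation_best_dev u p s)).
  by rewrite subr_le0.
have := sound_estimate_best_response best_le (uh_sound (p, s)).
have := sound_estimate_le_best_payoff eps_gt0 gstar_ge0 (uh_sound (p, s')) dev.
rewrite ler_distlC /util_of; lra.
Qed.

Lemma sound_Eg_sub (gamma : R) : 0 < eps -> 0 <= gamma <= gstar ->
  Eg gamma (util_of uh) \subset Eg (2 * eps + gamma) u.
Proof.
move=> eps_gt0 /andP[gamma_ge0 gamma_le].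
apply/fintype.subsetP => s /(EgP _ _ gamma_ge0) uh_gap.
apply/EgP => [|p s' dev]; first lra.
set a := best_dev u p s; have dev_a : deviation p s a := deviation_best_dev u p s.
have best_a : best_payoff u p a <= u p a.
  by rewrite (best_payoff_deviation u dev_a).
have := sound_estimate_best_response best_a (uh_sound (p, a)).
have := le_best_payoff u dev; have := uh_gap p a dev_a.
case: (uh_sound (p, s)) => [|[_]] /=;
  rewrite /util_of /best_payoff -/a !ler_distlC; lra.
Qed.

End sound_equilibria.
End sound_estimates.

Theorem theorem6 (R : realType) (P : finType) (S : P -> finType)
  (d : measure_display) (Omega : measurableType d) (Pr : probability Omega R)
  (delta eps_tgt gstar : R)
  (hdelta : 0 < delta < 1) (heps : 0 < eps_tgt) (hgstar : 0 <= gstar)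
  (Tn : nat) (m : nat -> nat)
  (X : nat -> gindex S -> Omega -> R) (epsb : nat -> Omega -> R)
  (u : P -> gprofile S -> R)
  (hbound : forall t : nat, (1 <= t <= Tn)%N -> forall i : gindex S,
     exists B : set Omega, measurable B /\
       B `<=` [set w | `|u i.1 i.2 - uhat m X t i w| <= epsb t w] /\
       ((1 - delta / (#|{: gindex S}|%:R * Tn%:R))%:E <= Pr B)%E) :
  exists G : set Omega, measurable G /\ ((1 - delta)%:E <= Pr G)%E /\
    forall w, G w -> forall uh, psreg eps_tgt gstar Tn m X epsb w = Some uh ->
      (E0 u \subset Eg (2 * eps_tgt) uh) /\
      (forall gamma : R, 0 <= gamma <= gstar ->
         Eg gamma uh \subset Eg (2 * eps_tgt + gamma) u).
Proof.
have [B B_spec] :=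
  boolp.choice (fun k : 'I_Tn * gindex S => hbound k.1.+1 (ltn_ord k.1) k.2).
pose G := \big[setI/setT]_(k <- enum {: 'I_Tn * gindex S}) B k.
exists G; split; first by apply: bigsetI_measurable => k _; exact: (B_spec k).1.
split.
  apply: le_trans (probability_bigsetI_ge _ (fun k => (B_spec k).1)
                                            (fun k => (B_spec k).2.2)).
  rewrite lee_fin lerD2l lerN2 -cardE card_prod card_ord mulnC natrM.
  have [->|N_neq0] := eqVneq (#|{: gindex S}|%:R * Tn%:R : R) 0.
    by rewrite mul0r ltW //; case/andP: hdelta. (* x / 0 = 0 *)
  by rewrite mulrC divfK.
move=> w Gw uh; rewrite /psreg; case run: psreg_loop => [v|] //= [<-].
have acc t : (1 <= t < 1 + Tn)%N ->
    forall i, `|u i.1 i.2 - uhat m X t i w| <= epsb t w.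
  case/andP=> t_ge1 t_le i; have t_lt : (t.-1 < Tn)%N by rewrite prednK.
  have := (B_spec (Ordinal t_lt, i)).2.1 w; rewrite /= prednK //; apply.
  by move: Gw; rewrite /G -bigcap_seq; apply; rewrite /= mem_enum.
have v_sound i : sound_estimate u eps_tgt gstar i (v i).
  by apply: (psreg_loop_sound heps hgstar acc _ run) => j; rewrite inE.
split; first exact: sound_E0_sub.
by move=> gamma gamma_range; exact: sound_Eg_sub.
Qed.
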